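(* Let $a\in(-2,0)$, $r(x)=ax/(1+x)$ for $x>-1$, $A_a(m)=m+r(m)+\frac{1}{r(m)}\int_m^0 r(s)\,ds$, and let $m\in(-1,0)$ and $M>0$ with $M\le A_a(m)$. Then $$\beta_-:=\frac{1}{2a}+\frac{m}{r(M)}>0.$$ *)

From Stdlib Require Import Reals.
From Coquelicot Require Import Coquelicot.
Open Scope R_scope.

Definition r_fun (a x : R) : R := a * x / (1 + x).

Definition A_fun (a m : R) : R :=
  m + r_fun a m + (1 / r_fun a m) * RInt (r_fun a) m 0.

(* Evaluating the integral gives A_a(m) = m + r(m) + (1+m)(ln(1+m) - m)/m, and
   (1+m) ln(1+m) >= m shows that the last term is at most -m, so M <= A_a(m) <= r(m),
   i.e. M (1+m) <= a m.  Clearing the (negative) denominator 2aM, the sign of beta_-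
   is that of -(M + 2m(1+M)), and M + 2m(1+M) <= m (a + 2 + M) < 0. *)
From Stdlib Require Import Reals Lra Psatz.
From Coquelicot Require Import Coquelicot.
Open Scope R_scope.

Lemma ln_ge_1_sub_inv (y : R) : 0 < y -> 1 - / y <= ln y.
Proof.
  intros Hy.
  pose proof (exp_ineq1_le (- ln y)) as H.
  rewrite exp_Ropp, exp_ln in H by exact Hy.
  lra.
Qed.

Lemma continuous_r_fun (a x : R) : -1 < x -> continuous (r_fun a) x.
Proof.
  intros Hx. unfold r_fun.
  apply continuity_pt_filterlim, continuity_pt_div.
  - apply continuity_pt_mult; [apply continuity_pt_const; now intros u v|apply continuity_pt_id].
  - apply continuity_pt_plus; [apply continuity_pt_const; now intros u v|apply continuity_pt_id].
  - lra.
Qed.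

Lemma RInt_r_fun (a m : R) : -1 < m ->
  RInt (r_fun a) m 0 = a * (ln (1 + m) - m).
Proof.
  intros Hm.
  apply is_RInt_unique.
  replace (a * (ln (1 + m) - m)) with
    (minus ((fun s => a * (s - ln (1 + s))) 0) ((fun s => a * (s - ln (1 + s))) m)).
  2: { unfold minus, plus, opp; simpl. rewrite Rplus_0_r, ln_1. ring. }
  assert (Hdom : forall x, Rmin m 0 <= x <= Rmax m 0 -> -1 < x).
  { intros x [Hx _]. assert (-1 < Rmin m 0) by (apply Rmin_glb_lt; lra). lra. }
  apply (is_RInt_derive (fun s => a * (s - ln (1 + s))) (r_fun a)).
  - intros x Hx. specialize (Hdom x Hx).
    unfold r_fun. auto_derive; [lra|field; lra].
  - intros x Hx. exact (continuous_r_fun a x (Hdom x Hx)).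
Qed.

Lemma A_fun_le_r_fun (a m : R) : a <> 0 -> -1 < m < 0 -> A_fun a m <= r_fun a m.
Proof.
  intros Ha Hm.
  unfold A_fun. rewrite RInt_r_fun by lra.
  assert (Hln : m <= (1 + m) * ln (1 + m)).
  { pose proof (ln_ge_1_sub_inv (1 + m)) as H.
    replace m with ((1 + m) * (1 - / (1 + m))) at 1 by (field; lra).
    apply Rmult_le_compat_l; lra. }
  assert (Htail : 1 / r_fun a m * (a * (ln (1 + m) - m))
                  = (1 + m) * (ln (1 + m) - m) / m).
  { unfold r_fun. field. repeat split; lra. }
  rewrite Htail.
  assert (Hbound : (1 + m) * (ln (1 + m) - m) / m <= - m).
  { apply (Rmult_le_reg_r (- m)); [lra|].
    replace ((1 + m) * (ln (1 + m) - m) / m * - m)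
      with (- ((1 + m) * (ln (1 + m) - m))) by (field; lra).
    nra. }
  lra.
Qed.

Lemma beta_minus_pos_of_le_r_fun (a m M : R) :
  -2 < a < 0 -> -1 < m < 0 -> 0 < M -> M <= r_fun a m ->
  1 / (2 * a) + m / r_fun a M > 0.
Proof.
  intros Ha Hm HM HMr.
  assert (HMm : M * (1 + m) <= a * m).
  { unfold r_fun in HMr.
    replace (a * m) with (a * m / (1 + m) * (1 + m)) by (field; lra).
    apply Rmult_le_compat_r; lra. }
  assert (Hnum : M + 2 * m * (1 + M) < 0) by nra.
  unfold r_fun.
  replace (1 / (2 * a) + m / (a * M / (1 + M)))
    with ((M + 2 * m * (1 + M)) * / (2 * a * M)) by (field; repeat split; lra).
  assert (Hden : / (2 * a * M) < 0) by (apply Rinv_lt_0_compat; nra).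
  nra.
Qed.

Theorem lemma4p1 (a m M : R) :
  -2 < a < 0 -> -1 < m < 0 -> 0 < M -> M <= A_fun a m ->
  1 / (2 * a) + m / r_fun a M > 0.
Proof.
  intros Ha Hm HM HA.
  apply beta_minus_pos_of_le_r_fun; try assumption.
  apply (Rle_trans _ _ _ HA), A_fun_le_r_fun; lra.
Qed.
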